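(* Let $\mathcal{D}=(V,E)$ be a DAG with $n=|V|$ nodes, and let $\mathcal{U}$ be its unconditional dependence graph. Then $\mathcal{U}$ is equal to each of the following undirected graphs on $V$: (1) $\mathcal{U}_1=(V,\{\{v,w\}: v\neq w,\ \mathrm{an}_\mathcal{D}(v)\cap\mathrm{an}_\mathcal{D}(w)\neq\emptyset\})$, i.e. two distinct nodes are adjacent iff they have a common ancestor in $\mathcal{D}$; (2) $\mathcal{U}_2=\big(V,\bigcup_{m\in\mathrm{ma}_\mathcal{D}(V)}\{\{v,w\}: v,w\in\mathrm{de}_\mathcal{D}(m),\ v\neq w\}\big)$; (3) $\mathcal{U}_3=m(t(r(\mathcal{D})))$; (4) the graph $\mathcal{U}_4$ whose adjacency matrix is $a(T^\top T)$, where $T=\sum_{p=0}^{n-1}A_\mathcal{D}^p$.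
   Context: A DAG $\mathcal{D}=(V,E)$ has adjacency matrix $A_\mathcal{D}=[a_{v,w}]$ with $a_{v,w}=1$ iff $v\to w\in E$, else $0$ (identify $V$ with $[n]$). $\mathrm{an}_\mathcal{D}(v)$ and $\mathrm{de}_\mathcal{D}(v)$ denote the ancestors/descendants of $v$ (nodes with a directed path to/from $v$), with $v\in\mathrm{an}_\mathcal{D}(v)$ and $v\in\mathrm{de}_\mathcal{D}(v)$. $\mathrm{ma}_\mathcal{D}(V)$ is the set of source nodes of $\mathcal{D}$ (nodes with no parents). A collider on a path is a node $u$ with both incident path edges pointing into $u$; a trek is a path (no repeated vertices) with no collider. The unconditional dependence graph $\mathcal{U}^\mathcal{D}$ of $\mathcal{D}$ is the undirected graph on $V$ in which distinct $v,w$ are adjacent iff there is a trek between $v$ and $w$ in $\mathcal{D}$ (i.e. $v,w$ are d-connected given $\emptyset$). Operators: $r(\mathcal{D})$ reverses every edge of $\mathcal{D}$; $t(\mathcal{D})$ is the transitive closure (add $v\to w$ whenever there is a directed path from $v$ to $w$); $m(\mathcal{D})$ (moralization) adds an edge between every pair of nonadjacent nodes having a common child and then makes all edges undirected. For a symmetric matrix $M$, $a(M)$ is the $0/1$ matrix with $a(M)_{v,w}=1$ iff $v\neq w$ and $M_{v,w}\neq 0$. *)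

(* A DAG on V = 'I_n is given by its edge relation e : rel 'I_n
   (e v w <-> v -> w is an edge). *)
From mathcomp Require Import all_boot all_order all_algebra.
Set Implicit Arguments. Unset Strict Implicit. Unset Printing Implicit Defensive.
Import GRing.Theory Num.Theory.
Local Open Scope ring_scope.

Section DAG.
Variable n : nat.
Implicit Types (e : rel 'I_n) (v w u : 'I_n).

Definition acyclic e : Prop := forall v w, e v w -> ~~ connect e w v.

Definition is_ancestor e u v : bool := connect e u v.
Definition is_descendant e u v : bool := connect e v u.

Definition is_source e m : Prop := forall u, ~~ e u m.

Definition adjmx e : 'M[int]_n := \matrix_(v, w) (e v w)%:R.

(* a trek between v and w: a path x_0 = v, ..., x_k = w in the skeleton with
   no repeated vertices and no collider at the interior nodes. *)
Definition is_trek e v w (s : seq 'I_n) : Prop :=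
  let p := v :: s in
  [/\ uniq p, last v s = w,
      path (fun x y => e x y || e y x) v s &
      forall i, (0 < i)%N -> (i < size s)%N ->
        ~~ (e (nth v p i.-1) (nth v p i) && e (nth v p i.+1) (nth v p i))].

Definition udg e v w : Prop := v != w /\ exists s, is_trek e v w s.

Definition U1 e v w : Prop :=
  v != w /\ exists u, is_ancestor e u v && is_ancestor e u w.

Definition U2 e v w : Prop :=
  v != w /\ exists m, is_source e m /\ is_descendant e v m /\ is_descendant e w m.

Definition rev_dag e : rel 'I_n := fun x y => e y x.
Definition tclos e : rel 'I_n := fun x y => [exists z, e x z && connect e z y].
Definition moral e v w : Prop :=
  v != w /\ (e v w \/ e w v \/ exists c, e v c && e w c).

Definition U3 e v w : Prop := moral (tclos (rev_dag e)) v w.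

Definition amx (M : 'M[int]_n) v w : bool := (v != w) && (M v w != 0).
Definition Tmx e : 'M[int]_n := \sum_(p < n) (adjmx e) ^+ p.
Definition U4 e v w : Prop := amx ((Tmx e)^T *m Tmx e) v w.

End DAG.

From mathcomp Require Import all_boot all_order all_algebra.
Set Implicit Arguments. Unset Strict Implicit. Unset Printing Implicit Defensive.
Import GRing.Theory Num.Theory.

(* Each of the graphs relates v != w exactly when v and w have a common
   ancestor.  A trek has no collider, so it climbs from v to a top node and
   then descends to w, and its top is a common ancestor.  Conversely, two
   simple directed paths from a common ancestor, restarted at a shared vertex
   until they are disjoint, glue into a trek that changes direction only at
   its top.  Every ancestor lies below a source, which gives (2); the edges
   of t(r(D)) point from proper descendants to ancestors, which gives (3);
   and T u x != 0 iff u ~> x, since a shortest directed path has length < n,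
   which gives (4). *)

Section Treks.
Variables (n : nat) (e : rel 'I_n).

Local Notation skel := (fun x y => e x y || e y x).

Fixpoint collider_free (x : 'I_n) (s : seq 'I_n) : bool :=
  if s is y :: s' then
    (if s' is z :: _ then ~~ (e x y && e z y) else true) && collider_free y s'
  else true.

Lemma collider_freeP v s :
  (forall i, (0 < i)%N -> (i < size s)%N ->
      ~~ (e (nth v (v :: s) i.-1) (nth v (v :: s) i) &&
          e (nth v (v :: s) i.+1) (nth v (v :: s) i))) <-> collider_free v s.
Proof.
elim: s v => [|y s IH] v /=; first by split=> // _ [|i].
have nth_shift i : (i.+1 < size s)%N ->
  [/\ nth v (y :: s) i = nth y (y :: s) i, nth v s i = nth y s i
    & nth v s i.+1 = nth y s i.+1].
  move=> isz; rewrite !(set_nth_default y v) //; first exact: ltnW.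
  by rewrite /= ltnS; do 2!apply: ltnW.
split.
- move=> H; apply/andP; split.
  + by case: s H {IH nth_shift} => [|z s] H //; exact: (H 1%N).
  + apply/IH => -[|i] // _ isz; have := H i.+2 (ltn0Sn _) isz.
    by have [/= <- <- <-] := nth_shift i isz.
- case/andP=> H1 /IH H2 [|[|i]] //= _.
  + by case: s H1 {H2 IH nth_shift}.
  + rewrite ltnS => isz; have := H2 i.+1 (ltn0Sn _) isz.
    by have [/= -> -> ->] := nth_shift i isz.
Qed.

(* A collider-free path that leaves x forwards never turns back, so it is a
   directed path from x; otherwise its top lies further along. *)
Lemma collider_free_top x s : path skel x s -> collider_free x s ->
  (e x (head x s) -> connect e x (last x s)) /\
  exists t, connect e t x && connect e t (last x s).
Proof.
elim: s x => [|y s IH] x /=.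
  by move=> _ _; split=> [_|]; [exact: connect0 | exists x; rewrite connect0].
case/andP=> exy /[dup] ps /IH {}IH /andP[c /IH [forward [t /andP[tx ts]]]].
have descend : e x y -> connect e x (last y s).
  move=> exy'; apply: connect_trans (connect1 exy') _.
  case: s ps c forward {ts IH} => [|z s] /=; first by rewrite connect0.
  case/andP=> eyz _ nc forward; apply: forward.
  by move: eyz nc; rewrite exy' /= => /orP[//|->].
split=> //; case exy': (e x y); first by exists x; rewrite connect0 descend.
rewrite exy' /= in exy.
by exists t; rewrite ts (connect_trans tx (connect1 exy)).
Qed.

Lemma trek_common_ancestor v w s :
  is_trek e v w s -> exists t, connect e t v && connect e t w.
Proof.
case=> _ <- ps /collider_freeP nc.
by have [_ [t ht]] := collider_free_top ps nc; exists t.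
Qed.

Hypothesis acyc : acyclic e.

Lemma acyclic_asym x y : e x y -> e y x = false.
Proof.
by move=> exy; apply/negbTE/negP=> eyx; move: (acyc exy); rewrite connect1.
Qed.

Lemma collider_free_directed x s : path e x s -> collider_free x s.
Proof.
elim: s x => [|y s IH] x //= /andP[exy ps]; rewrite IH // andbT.
by case: s ps {IH} => [|z s] //= /andP[eyz _]; rewrite (acyclic_asym eyz) andbF.
Qed.

Lemma collider_free_up_down x a b :
    path (fun u w => e w u) x a -> path e (last x a) b ->
  collider_free x (a ++ b).
Proof.
elim: a x => [|y a IH] x /=; first by move=> _; exact: collider_free_directed.
case/andP=> eyx pa pb; rewrite IH // andbT.
by case: (a ++ b) => // z _; rewrite (acyclic_asym eyx).
Qed.

Lemma trek_of_disjoint_paths t l r : path e t l -> path e t r ->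
  uniq (t :: l) -> uniq (t :: r) -> ~~ has (mem l) r ->
  is_trek e (last t l) (last t r) (rev (belast t l) ++ r).
Proof.
move=> pl pr ul ur dis.
have glued : last t l :: (rev (belast t l) ++ r) = rev (t :: l) ++ r.
  by rewrite [t :: l]lastI rev_rcons.
have top : last (last t l) (rev (belast t l)) = t.
  by case: (l) => //= y l'; rewrite rev_cons last_rcons.
split.
- rewrite glued cat_uniq rev_uniq ul /=; move: ur => /= /andP[tr ->].
  rewrite andbT; apply/hasPn => x xr; rewrite mem_rev inE negb_or.
  apply/andP; split; first by apply: contraNneq tr => <-.
  by apply: contra dis => xl; apply/hasP; exists x.
- by rewrite last_cat top.
- rewrite cat_path top rev_path; apply/andP.
  by split; [apply: sub_path pl | apply: sub_path pr] => a b ->; rewrite ?orbT.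
- by apply/collider_freeP; apply: collider_free_up_down; rewrite ?top ?rev_path.
Qed.

Lemma common_ancestor_trek t v w :
  connect e t v -> connect e t w -> exists s, is_trek e v w s.
Proof.
move=> /connectP [l0 pl0 ->] /connectP [r0 pr0 ->].
case: (shortenP pl0) => l pl ul _; case: (shortenP pr0) => r pr ur _.
have [k lr_le_k] : exists k, (size l + size r <= k)%N by eexists.
elim: k t l r pl ul pr ur {l0 r0 pl0 pr0} lr_le_k => [|k IH] t l r pl ul pr ur.
  by case: l r {pl ul pr ur} => [|? ?] [|? ?] // _; exists [::]; split.
move=> lr_le_k; case meet: (has (mem l) r); last first.
  exists (rev (belast t l) ++ r).
  by apply: trek_of_disjoint_paths; rewrite ?meet.
case/hasP: meet => x xr xl.
case/splitPr: xl pl ul lr_le_k => l1 l2.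
case/splitPr: xr pr ur => r1 r2 pr ur pl ul lr_le_k.
rewrite !last_cat /=.
move: pl pr; rewrite !cat_path /= => /and3P[_ _ pl2] /and3P[_ _ pr2].
apply: (IH x l2 r2) => //.
- by move: ul; rewrite -cat_cons cat_uniq => /and3P[].
- by move: ur; rewrite -cat_cons cat_uniq => /and3P[].
- move: lr_le_k; rewrite !size_cat /= !addnS !addSn ltnS; apply: leq_trans.
  by apply: leqW; apply: leq_add; apply: leq_addl.
Qed.

Lemma udg_common_ancestor v w : udg e v w <-> U1 e v w.
Proof.
split; case=> vw.
  by case=> s /trek_common_ancestor [t ht]; split=> //; exists t.
by case=> t /andP[tv tw]; split=> //; exact: common_ancestor_trek tv tw.
Qed.

Lemma exists_source_ancestor u : exists m, is_source e m /\ connect e m u.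
Proof.
have [k anc_le_k] : exists k, (#|[pred x | connect e x u]| <= k)%N by eexists.
elim: k u anc_le_k => [|k IH] u anc_le_k.
  suff : (0 < #|[pred x | connect e x u]|)%N by rewrite lt0n -leqn0 anc_le_k.
  by apply/card_gt0P; exists u; rewrite inE connect0.
have [[p epu]|] := altP (@existsP _ (fun x => e x u)); last first.
  by rewrite negb_exists => /forallP src; exists u; rewrite connect0.
have fewer : (#|[pred x | connect e x p]| < #|[pred x | connect e x u]|)%N.
  apply/proper_card/properP; split.
    apply/subsetP=> x; rewrite !inE => /connect_trans; apply.
    exact: connect1 epu.
  by exists u; rewrite !inE ?connect0 // (negbTE (acyc epu)).
have [m [sm cm]] := IH p (leq_trans fewer anc_le_k).
by exists m; split=> //; apply: connect_trans cm (connect1 epu).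
Qed.

Lemma common_ancestor_source v w : U1 e v w <-> U2 e v w.
Proof.
split; case=> vw.
  case=> t /andP[tv tw]; have [m [sm mt]] := exists_source_ancestor t.
  by split=> //; exists m; split=> //; split; exact: connect_trans mt _.
by case=> m [_ [mv mw]]; split=> //; exists m; exact/andP.
Qed.

Lemma tclos_rev_dag x y : tclos (rev_dag e) x y = (y != x) && connect e y x.
Proof.
apply/existsP/andP.
  case=> z /andP[ezx]; rewrite connect_rev => cyz; rewrite /rev_dag in ezx.
  split; last exact: connect_trans cyz (connect1 ezx).
  by apply: contraNneq (acyc ezx) => yx; rewrite -yx.
case=> yx /connectP [q pq xq].
case/lastP: q pq xq => [|q z] pq xq; first by rewrite xq eqxx in yx.
rewrite last_rcons in xq; move: pq; rewrite rcons_path => /andP[pq ez].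
exists (last y q); rewrite /rev_dag xq ez connect_rev.
by apply/connectP; exists q.
Qed.

Lemma common_ancestor_moral v w : U1 e v w <-> U3 e v w.
Proof.
rewrite /U3 /moral !tclos_rev_dag; split; case=> vw.
  case=> t; rewrite /is_ancestor => /andP[tv tw]; split=> //.
  have [tv_eq|tv'] := eqVneq t v; first by right; left; rewrite vw -tv_eq tw.
  have [tw_eq|tw'] := eqVneq t w; first by left; rewrite -tw_eq tv' tv.
  by right; right; exists t; rewrite !tclos_rev_dag tv' tw' tv tw.
move=> moral_vw; split=> //.
case: moral_vw => [/andP[_ wv]|[/andP[_ vw']|[t]]].
- by exists w; rewrite /is_ancestor wv connect0.
- by exists v; rewrite /is_ancestor vw' connect0.
- rewrite !tclos_rev_dag => /andP[/andP[_ tv] /andP[_ tw]].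
  by exists t; rewrite /is_ancestor tv tw.
Qed.

End Treks.

Local Open Scope ring_scope.

Lemma psumr_neq0_exists (R : numDomainType) (I : finType) (F : I -> R) :
  (forall i, 0 <= F i) -> reflect (exists i, F i != 0) (\sum_i F i != 0).
Proof.
move=> F_ge0; rewrite psumr_neq0 //; apply: (iffP hasP) => -[i].
  by move=> _ /=; rewrite lt0r => /andP[Fi _]; exists i.
by move=> Fi; exists i; [exact: mem_index_enum | rewrite /= lt0r Fi F_ge0].
Qed.

Section AdjacencyMatrix.
Variables (n : nat) (e : rel 'I_n).

Fixpoint walk (p : nat) (u x : 'I_n) : bool :=
  if p is p'.+1 then [exists z, e u z && walk p' z x] else u == x.

Lemma adjmx_ge0 u z : 0 <= adjmx e u z.
Proof. by rewrite mxE ler0n. Qed.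

Lemma adjmx_pow_ge0 p u x : 0 <= (adjmx e ^+ p) u x.
Proof.
elim: p u x => [|p IH] u x; first by rewrite mxE ler0n.
by rewrite exprS -mulmxE mxE sumr_ge0 // => z _; rewrite mulr_ge0 ?adjmx_ge0.
Qed.

Lemma adjmx_pow_neq0 p u x : reflect (walk p u x) ((adjmx e ^+ p) u x != 0).
Proof.
elim: p u x => [|p IH] u x.
  by rewrite mxE /=; case: (u == x); constructor; rewrite ?oner_eq0.
rewrite exprS -mulmxE mxE /=.
have summand_ge0 z : 0 <= adjmx e u z * (adjmx e ^+ p) z x.
  by rewrite mulr_ge0 ?adjmx_ge0 ?adjmx_pow_ge0.
apply: (iffP (psumr_neq0_exists summand_ge0)).
- case=> z; rewrite mulf_eq0 negb_or mxE pnatr_eq0 eqb0 negbK.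
  by case/andP=> ez /IH w; apply/existsP; exists z; rewrite ez.
- case/existsP=> z /andP[ez /IH w]; exists z.
  by rewrite mulf_eq0 negb_or mxE ez w.
Qed.

Lemma walk_connect p u x : walk p u x -> connect e u x.
Proof.
elim: p u => [|p IH] u /=; first by move/eqP->; exact: connect0.
by case/existsP=> z /andP[/connect1 ez /IH]; exact: connect_trans.
Qed.

Lemma path_walk u q : path e u q -> walk (size q) u (last u q).
Proof.
elim: q u => [|y q IH] u /=; first by rewrite eqxx.
by case/andP=> euy /IH w; apply/existsP; exists y; rewrite euy.
Qed.

Lemma Tmx_ge0 u x : 0 <= Tmx e u x.
Proof. by rewrite /Tmx summxE sumr_ge0 // => p _; exact: adjmx_pow_ge0. Qed.

(* A shortest directed path visits each of the n nodes at most once, so its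
   length is below n and it is counted by one of the summands of T. *)
Lemma Tmx_neq0 u x : reflect (connect e u x) (Tmx e u x != 0).
Proof.
have summand_ge0 (p : 'I_n) := adjmx_pow_ge0 p u x.
rewrite /Tmx summxE; apply: (iffP (psumr_neq0_exists summand_ge0)).
- by case=> p /adjmx_pow_neq0; exact: walk_connect.
- case/connectP=> q0 pq0 ->; case: (shortenP pq0) => q pq uq _.
  have short : (size q < n)%N.
    by have := max_card (mem (u :: q)); rewrite card_ord (card_uniqP uq).
  by exists (Ordinal short); apply/adjmx_pow_neq0; exact: path_walk.
Qed.

Lemma common_ancestor_Tmx v w : U1 e v w <-> U4 e v w.
Proof.
rewrite /U4 /amx mxE.
have summand_ge0 u : 0 <= (Tmx e)^T v u * Tmx e u w.
  by rewrite mxE mulr_ge0 ?Tmx_ge0.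
split.
  case=> -> [u /andP[uv uw]]; apply/(psumr_neq0_exists summand_ge0).
  by exists u; rewrite mulf_eq0 negb_or mxE; apply/andP; split; apply/Tmx_neq0.
case/andP=> vw /(psumr_neq0_exists summand_ge0) [u].
rewrite mulf_eq0 negb_or mxE => /andP[/Tmx_neq0 uv /Tmx_neq0 uw].
by split=> //; exists u; rewrite /is_ancestor uv uw.
Qed.

End AdjacencyMatrix.

Theorem theorem2p2 (n : nat) (e : rel 'I_n) :
  acyclic e ->
  (forall v w : 'I_n, udg e v w <-> U1 e v w) /\
  (forall v w : 'I_n, udg e v w <-> U2 e v w) /\
  (forall v w : 'I_n, udg e v w <-> U3 e v w) /\
  (forall v w : 'I_n, udg e v w <-> U4 e v w).
Proof.
move=> acyc; have U1E := udg_common_ancestor acyc.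
split; first exact: U1E.
split=> [v w|]; first exact: iff_trans (U1E v w) (common_ancestor_source acyc v w).
split=> [v w|]; first exact: iff_trans (U1E v w) (common_ancestor_moral acyc v w).
by move=> v w; apply: iff_trans (U1E v w) (common_ancestor_Tmx e v w).
Qed.
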